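(* For every $n$ and every $k\in[1,\lfloor\frac{n-1}{2}\rfloor]$ there exist Latin squares of order $n$ with inner distance $k$. Moreover, for any Latin square $L$ of order $n$ with inner distance $k$, $L$ is isotopic to Latin squares of every inner distance less than $k$, and these can be obtained from $L$ by symbol permutation alone.
   Context: A Latin square of order $n$ is an $n\times n$ matrix with entries from the symbol set $[1,n]=\{1,\dots,n\}$ in which every row and every column contains each symbol exactly once. The distance between symbols $a,b\in[1,n]$ is $\mathrm{dist}(a,b)=\min\{(a-b)\bmod n,\ (b-a)\bmod n\}$, with remainders taken in $[0,n-1]$. Two cells are adjacent if they share an edge horizontally or vertically. The inner distance of a Latin square is the minimum of $\mathrm{dist}$ over all pairs of symbols in adjacent cells. The maximum inner distance of a Latin square of order $n$ is $\lfloor\frac{n-1}{2}\rfloor$. A symbol permutation of a Latin square $L$ by a bijection $\sigma$ of $[1,n]$ is the Latin square whose $(i,j)$ entry is $\sigma(m_{i,j})$, where $m_{i,j}$ is the $(i,j)$ entry of $L$. Two Latin squares are isotopic if they differ by some combination of symbol permutation, row permutations, and column permutations. (Proof idea: repeatedly apply transpositions of symbols $(n,1)$ after a cyclic shift of symbols, each of which lowers the inner distance by exactly 1.) *)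

(* Symbols are 'I_n = {0,..,n-1} (the paper's symbol s in [1,n]
   corresponds to s-1; the cyclic distance is shift-invariant). *)
From mathcomp Require Import all_boot all_algebra all_fingroup.
Set Implicit Arguments. Unset Strict Implicit. Unset Printing Implicit Defensive.

Definition latin_square (n : nat) (L : 'M['I_n]_n) : Prop :=
  (forall i : 'I_n, injective (fun j : 'I_n => L i j)) /\
  (forall j : 'I_n, injective (fun i : 'I_n => L i j)).

Definition sdist (n : nat) (a b : 'I_n) : nat :=
  minn ((a + n - b) %% n) ((b + n - a) %% n).

Definition adjacent (n : nat) (i j i' j' : 'I_n) : bool :=
  ((i == i') && ((j.+1 == j' :> nat) || (j'.+1 == j :> nat))) ||
  ((j == j') && ((i.+1 == i' :> nat) || (i'.+1 == i :> nat))).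

Definition has_inner_distance (n : nat) (L : 'M['I_n]_n) (k : nat) : Prop :=
  (forall i j i' j' : 'I_n, adjacent i j i' j' -> k <= sdist (L i j) (L i' j')) /\
  (exists i j i' j' : 'I_n, adjacent i j i' j' /\ sdist (L i j) (L i' j') = k).

Definition sym_perm (n : nat) (s : {perm 'I_n}) (L : 'M['I_n]_n) : 'M['I_n]_n :=
  \matrix_(i, j) s (L i j).

Definition isotopic (n : nat) (L M : 'M['I_n]_n) : Prop :=
  exists (s r c : {perm 'I_n}), forall i j : 'I_n, M i j = s (L (r i) (c j)).

From mathcomp Require Import all_boot all_algebra all_fingroup.
From mathcomp Require Import zify.

(* Ordering the rows and columns of the addition table of Z_n by the zigzag
   0, ⌈n/2⌉, 1, ⌈n/2⌉+1, ... puts symbols at cyclic distance at least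
   ⌊(n-1)/2⌋ in all adjacent cells, which is the maximum.  To lower an inner
   distance k >= 2 by one, pick adjacent cells holding p and p + k and swap the
   cyclically consecutive symbols p and p + 1: this moves any two symbols
   closer by at most one, and brings p + 1 and p + k to distance k - 1.
   Iterating reaches every smaller inner distance by symbol permutations. *)

Set Implicit Arguments.
Unset Strict Implicit.
Unset Printing Implicit Defensive.

Definition cdist (n u v : nat) : nat := minn (u - v + (v - u)) (n - (u - v + (v - u))).

Lemma cdistC n u v : cdist n u v = cdist n v u.
Proof. by rewrite /cdist; lia. Qed.

Lemma modn_below_double x n : x < n + n ->
  x < n /\ x %% n = x \/ n <= x /\ x %% n = x - n.
Proof.
move=> x_lt; case: (ltnP x n) => [x_lt_n | n_le_x]; first by left; rewrite modn_small.
right; split=> //.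
by rewrite -[in LHS](subnK n_le_x) modnDr modn_small //; lia.
Qed.

Lemma sdist_cdist n (a b : 'I_n) : sdist a b = cdist n a b.
Proof.
have a_lt := ltn_ord a; have b_lt := ltn_ord b.
rewrite /sdist /cdist.
have [[? ->]|[? ->]] := @modn_below_double (a + n - b) n ltac:(lia);
have [[? ->]|[? ->]] := @modn_below_double (b + n - a) n ltac:(lia); lia.
Qed.

Lemma cdist_modDl n a x y : a < n -> x < n -> y < n ->
  cdist n ((a + x) %% n) ((a + y) %% n) = cdist n x y.
Proof.
move=> a_lt x_lt y_lt; rewrite /cdist.
have [[? ->]|[? ->]] := @modn_below_double (a + x) n ltac:(lia);
have [[? ->]|[? ->]] := @modn_below_double (a + y) n ltac:(lia); lia.
Qed.

Lemma ordS_cases n (p : 'I_n) :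
  p.+1 < n /\ ordS p = p.+1 :> nat \/ p.+1 = n /\ ordS p = 0 :> nat.
Proof.
have p_lt := ltn_ord p; rewrite /=.
case: (ltnP p.+1 n) => [p1_lt | n_le]; first by left; rewrite modn_small.
right; have p1_n : p.+1 = n by lia.
by rewrite p1_n modnn.
Qed.

Lemma cdist_tperm_ordS n (p x y : 'I_n) :
  (cdist n x y).-1 <= cdist n (tperm p (ordS p) x) (tperm p (ordS p) y).
Proof.
have := ordS_cases p; have p_lt := ltn_ord p.
have x_lt := ltn_ord x; have y_lt := ltn_ord y.
by case: tpermP => [->|->|_ _]; case: tpermP => [->|->|_ _]; rewrite /cdist; lia.
Qed.

Lemma cdist_tperm_ordS_ahead n (p q : 'I_n) k : 1 < k -> cdist n p q = k ->
  q = (p + k) %% n :> nat ->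
  cdist n (tperm p (ordS p) p) (tperm p (ordS p) q) = k.-1.
Proof.
rewrite tpermL => k_gt1 pq_k; have := ordS_cases p; have q_lt := ltn_ord q.
have [[? ->]|[? ->]] := @modn_below_double (p + k) n ltac:(rewrite /cdist in pq_k; lia);
by case: tpermP => [->|->|_ _]; rewrite /cdist in pq_k *; lia.
Qed.

Lemma cdist_orient n (a b : 'I_n) : exists p q : 'I_n,
  ((p, q) = (a, b) \/ (p, q) = (b, a)) /\ q = (p + cdist n a b) %% n :> nat.
Proof.
have [b_ahead | /eqP b_behind] := eqVneq (b : nat) ((a + cdist n a b) %% n).
  by exists a, b; split; [left|].
exists b, a; split; first by right.
have a_lt := ltn_ord a; have b_lt := ltn_ord b.
have d_def : cdist n a b = minn (a - b + (b - a)) (n - (a - b + (b - a))) by [].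
move: b_behind.
have [[? ->]|[? ->]] := @modn_below_double (a + cdist n a b) n ltac:(lia);
have [[? ->]|[? ->]] := @modn_below_double (b + cdist n a b) n ltac:(lia);
lia.
Qed.

Lemma sym_perm1 n (L : 'M['I_n]_n) : sym_perm 1%g L = L.
Proof. by apply/matrixP => i j; rewrite mxE perm1. Qed.

Lemma sym_permM n (s t : {perm 'I_n}) (L : 'M['I_n]_n) :
  sym_perm t (sym_perm s L) = sym_perm (s * t)%g L.
Proof. by apply/matrixP => i j; rewrite !mxE permM. Qed.

Lemma sym_perm_latin n (s : {perm 'I_n}) (L : 'M['I_n]_n) :
  latin_square L -> latin_square (sym_perm s L).
Proof.
move=> [row_inj col_inj]; split=> [i j1 j2 | j i1 i2]; rewrite !mxE => /perm_inj.
  exact: row_inj.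
exact: col_inj.
Qed.

Lemma sym_perm_isotopic n (s : {perm 'I_n}) (L : 'M['I_n]_n) : isotopic L (sym_perm s L).
Proof. by exists s, 1%g, 1%g => i j; rewrite mxE !perm1. Qed.

Lemma inner_distance_pred n (L : 'M['I_n]_n) k : 1 < k -> has_inner_distance L k ->
  exists s : {perm 'I_n}, has_inner_distance (sym_perm s L) k.-1.
Proof.
move=> k_gt1 [L_ge [i [j [i' [j' [adj_ij Lk]]]]]].
rewrite sdist_cdist in Lk.
have [p [q [pq_ab q_ahead]]] := cdist_orient (L i j) (L i' j').
rewrite Lk in q_ahead.
have pq_k : cdist n p q = k by case: pq_ab => -[-> ->]; rewrite // cdistC.
have pq_k1 := cdist_tperm_ordS_ahead k_gt1 pq_k q_ahead.
exists (tperm p (ordS p)); split.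
  move=> i1 j1 i2 j2 adj12; rewrite !mxE sdist_cdist.
  apply: leq_trans (cdist_tperm_ordS p _ _).
  by rewrite -!subn1 leq_sub2r // -sdist_cdist L_ge.
exists i, j, i', j'; split=> //; rewrite !mxE sdist_cdist.
by case: pq_ab => -[<- <-]; [|rewrite cdistC]; exact: pq_k1.
Qed.

Lemma inner_distance_sym_perm_below n (L : 'M['I_n]_n) k : has_inner_distance L k ->
  forall j, 0 < j <= k -> exists s : {perm 'I_n}, has_inner_distance (sym_perm s L) j.
Proof.
elim: k L => [|k IHk] L Lk j /andP[j_gt0]; first by rewrite leqNgt j_gt0.
rewrite leq_eqVlt ltnS => /orP[/eqP-> | j_le]; first by exists 1%g; rewrite sym_perm1.
have [s Ls] := inner_distance_pred (k := k.+1) (leq_trans j_gt0 j_le) Lk.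
have j_range : 0 < j <= k by rewrite j_gt0.
have [t Lt] := IHk _ Ls j j_range.
by exists (s * t)%g; rewrite -sym_permM.
Qed.

Section AdditionTable.

Variables (n : nat) (n_gt0 : 0 < n) (f : nat -> nat).
Hypothesis f_lt : forall j, j < n -> f j < n.

Definition addition_table : 'M['I_n]_n :=
  \matrix_(i, j) Ordinal (ltn_pmod (f i + f j) n_gt0).

Lemma addition_table_latin :
  (forall i j, i < n -> j < n -> f i = f j -> i = j) -> latin_square addition_table.
Proof.
move=> f_inj; split=> [i j1 j2 | j i1 i2]; rewrite !mxE => /(congr1 val) /= /eqP.
  rewrite eqn_modDl !modn_small ?f_lt // => /eqP /f_inj f_j12.
  by apply: val_inj; apply: f_j12.
rewrite eqn_modDr !modn_small ?f_lt // => /eqP /f_inj f_i12.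
by apply: val_inj; apply: f_i12.
Qed.

Lemma addition_table_adjacent_ge k :
  (forall j, j.+1 < n -> k <= cdist n (f j) (f j.+1)) ->
  forall i j i' j', adjacent i j i' j' ->
    k <= sdist (addition_table i j) (addition_table i' j').
Proof.
move=> f_step i j i' j'; rewrite sdist_cdist !mxE /=.
case/orP => /andP[/eqP <- /orP[/eqP j_j' | /eqP j'_j]].
- by rewrite cdist_modDl ?f_lt // -j_j' f_step // j_j'.
- by rewrite cdist_modDl ?f_lt // cdistC -j'_j f_step // j'_j.
- by rewrite ![_ + f j]addnC cdist_modDl ?f_lt // -j_j' f_step // j_j'.
- by rewrite ![_ + f j]addnC cdist_modDl ?f_lt // cdistC -j'_j f_step // j'_j.
Qed.

End AdditionTable.

Definition zigzag n j := if odd j then j./2 + n.+1./2 else j./2.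

Lemma zigzag_lt n j : j < n -> zigzag n j < n.
Proof. by have := odd_double_half j; rewrite /zigzag; case: (odd j) => /=; lia. Qed.

Lemma zigzag_inj n i j : i < n -> j < n -> zigzag n i = zigzag n j -> i = j.
Proof.
have := odd_double_half i; have := odd_double_half j; rewrite /zigzag.
by case: (odd i); case: (odd j) => /=; lia.
Qed.

Lemma zigzag_step n j : j.+1 < n -> (n.-1)./2 <= cdist n (zigzag n j) (zigzag n j.+1).
Proof.
have := odd_double_half j; have := odd_double_half j.+1; rewrite /zigzag /cdist oddS.
by case: (odd j) => /=; lia.
Qed.

Lemma cdist_zigzag12 n : 2 < n -> cdist n (zigzag n 1) (zigzag n 2) = (n.-1)./2.
Proof. by rewrite /zigzag /cdist /=; lia. Qed.

Lemma zigzag_table_inner_distance n (n_gt0 : 0 < n) : 2 < n ->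
  has_inner_distance (addition_table n_gt0 (zigzag n)) (n.-1)./2.
Proof.
move=> n_gt2; split.
  by apply: addition_table_adjacent_ge => j; [exact: zigzag_lt | exact: zigzag_step].
have n_gt1 : 1 < n := ltnW n_gt2.
exists (Ordinal n_gt0), (Ordinal n_gt1), (Ordinal n_gt0), (Ordinal n_gt2); split=> //.
by rewrite sdist_cdist !mxE cdist_modDl ?zigzag_lt // cdist_zigzag12.
Qed.

Theorem mainTheorem7 (n : nat) :
  (forall k : nat, 1 <= k <= (n.-1)./2 ->
     exists L : 'M['I_n]_n, latin_square L /\ has_inner_distance L k) /\
  (forall (L : 'M['I_n]_n) (k : nat), latin_square L -> has_inner_distance L k ->
     forall j : nat, 1 <= j < k ->
       exists s : {perm 'I_n},
         latin_square (sym_perm s L) /\ isotopic L (sym_perm s L) /\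
         has_inner_distance (sym_perm s L) j).
Proof.
split=> [k k_range | L k L_latin Lk j /andP[j_gt0 j_lt_k]].
  have n_gt2 : 2 < n by lia.
  have n_gt0 : 0 < n := ltnW (ltnW n_gt2).
  have L_latin : latin_square (addition_table n_gt0 (zigzag n)).
    by apply: addition_table_latin; [exact: zigzag_lt | exact: zigzag_inj].
  have [s Ls] := inner_distance_sym_perm_below (zigzag_table_inner_distance n_gt0 n_gt2) k_range.
  by exists (sym_perm s (addition_table n_gt0 (zigzag n))); split; first exact: sym_perm_latin.
have j_range : 0 < j <= k by rewrite j_gt0 ltnW.
have [s Ls] := inner_distance_sym_perm_below Lk j_range.
by exists s; split; [exact: sym_perm_latin | split; [exact: sym_perm_isotopic |]].
Qed.
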